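(* Let $\lambda=[2,2,2,2]$ and $\mu=[4,1,1,1,1,1,1,1,1]$ (one entry $4$ and eight entries $1$). Then $\lambda$ stably embeds into $\mu$ (indeed $\lambda\times\nu\hookrightarrow\mu\times\nu$ for $\nu=[2,1,1]$), but $\mu$ does not supermajorize $\lambda$ and $\lambda$ does not embed into $\mu$.
   Context: Partitions are finite nonincreasing sequences of positive integers. The product $\lambda\times\nu$ is the partition of all products $\lambda_i\nu_j$, reordered nonincreasingly. $\lambda=[\lambda_1,\ldots,\lambda_m]$ embeds into $\mu=[\mu_1,\ldots,\mu_n]$, written $\lambda\hookrightarrow\mu$, if there is a map $\varphi:\{1,\ldots,m\}\to\{1,\ldots,n\}$ with $\sum_{i\in\varphi^{-1}(j)}\lambda_i\le\mu_j$ for all $j$. $\lambda$ stably embeds into $\mu$ if there is a partition $\nu$ with $\lambda\times\nu\hookrightarrow\mu\times\nu$. $\mu$ supermajorizes $\lambda$ (written $\lambda\preccurlyeq_S\mu$) if for every $x\in\mathbb N$, $\sum_{\lambda_i\ge x}\lambda_i\le\sum_{\mu_j\ge x}\mu_j$. *)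

From mathcomp Require Import all_boot.
Set Implicit Arguments. Unset Strict Implicit. Unset Printing Implicit Defensive.

Definition is_partition (s : seq nat) : bool :=
  sorted geq s && all (fun x => 0 < x) s.

Definition pprod (lam nu : seq nat) : seq nat :=
  sort geq [seq x * y | x <- lam, y <- nu].

Definition embeds (lam mu : seq nat) : Prop :=
  exists phi : 'I_(size lam) -> 'I_(size mu),
    forall j : 'I_(size mu),
      \sum_(i : 'I_(size lam) | phi i == j) nth 0 lam i <= nth 0 mu j.

Definition stably_embeds (lam mu : seq nat) : Prop :=
  exists nu : seq nat, is_partition nu /\ embeds (pprod lam nu) (pprod mu nu).

Definition supermajorizes (mu lam : seq nat) : Prop :=
  forall x : nat,
    \sum_(a <- lam | x <= a) a <= \sum_(b <- mu | x <= b) b.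

(* An embedding sends each part a >= x of lam into a part of mu that is at
   least a >= x, and the parts sent into one part of mu fit inside it; summing
   over the parts of mu that are >= x shows that every embedding is a
   supermajorization.  Here the four parts 2 of lam would all have to go into
   the single part 4 of mu, which is too small, so lam does not embed into mu.
   After multiplying by nu = [2; 1; 1] the products are [4 (x4); 2 (x8)] and
   [8; 4; 4; 2 (x8); 1 (x16)], and an explicit embedding is checked by
   computation: two 4's into the 8, the other two 4's into the 4's, and each
   2 into its own 2. *)

From mathcomp Require Import all_boot.

Set Implicit Arguments.
Unset Strict Implicit.
Unset Printing Implicit Defensive.

Lemma embeds_supermajorizes (lam mu : seq nat) :
  embeds lam mu -> supermajorizes mu lam.
Proof.
move=> [phi fit_phi] x.
rewrite (big_nth 0) big_mkord (partition_big phi xpredT) //=.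
rewrite [X in _ <= X](big_nth 0) big_mkord [X in _ <= X]big_mkcond /=.
apply: leq_sum => j _.
case: (leqP x (nth 0 mu j)) => [_ | mu_j_lt_x].
  apply: leq_trans (fit_phi j).
  rewrite [X in _ <= X](bigID (fun i : 'I_(size lam) => x <= nth 0 lam i)) /=.
  by rewrite big_andbC leq_addr.
rewrite leqn0; apply/eqP/big1 => i /andP[x_le_lam_i /eqP phi_i].
have lam_i_le_mu_j : nth 0 lam i <= nth 0 mu j.
  by rewrite -phi_i (leq_trans _ (fit_phi (phi i))) // (bigD1 i) ?leq_addr.
by move: mu_j_lt_x; rewrite ltnNge (leq_trans x_le_lam_i lam_i_le_mu_j).
Qed.

Definition embedding_certificate (phi lam mu : seq nat) : bool :=
  [&& size phi == size lam, all (gtn (size mu)) phi &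
      all (fun j => sumn [seq nth 0 lam i | i <- iota 0 (size lam)
                                          & nth 0 phi i == j] <= nth 0 mu j)
          (iota 0 (size mu))].

Lemma embeds_of_certificate (phi lam mu : seq nat) :
  embedding_certificate phi lam mu -> embeds lam mu.
Proof.
case/and3P=> /eqP size_phi /allP phi_lt /allP fit_phi.
have phi_ord (i : 'I_(size lam)) : nth 0 phi i < size mu.
  by apply: phi_lt; rewrite mem_nth // size_phi.
exists (fun i => Ordinal (phi_ord i)) => j.
have := fit_phi j; rewrite mem_iota ltn_ord => /(_ isT).
by rewrite sumnE big_map big_filter -[X in iota 0 X]subn0 big_mkord.
Qed.

Theorem mainTheorem5 :
  let lam := [:: 2; 2; 2; 2] in
  let mu := [:: 4; 1; 1; 1; 1; 1; 1; 1; 1] in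
  is_partition lam /\ is_partition mu /\
  stably_embeds lam mu /\
  embeds (pprod lam [:: 2; 1; 1]) (pprod mu [:: 2; 1; 1]) /\
  ~ supermajorizes mu lam /\
  ~ embeds lam mu.
Proof.
move=> lam mu.
have emb_nu : embeds (pprod lam [:: 2; 1; 1]) (pprod mu [:: 2; 1; 1]).
  by apply: (@embeds_of_certificate [:: 0; 0; 1; 2; 3; 4; 5; 6; 7; 8; 9; 10]).
have not_super : ~ supermajorizes mu lam.
  by move=> /(_ 2); rewrite !big_cons !big_nil.
do 2!split=> //.
split; first by exists [:: 2; 1; 1].
by do 2!split=> //; move/embeds_supermajorizes.
Qed.
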